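(* Consider a PWA system, as defined in the context, satisfying (A1)–(A4) with known global dynamical relative degree $\mu\ge1$. Then the inverse system with $u_k$ as output is given by the implicit, anticausal system $$x_{k+1}=\overline{\mathbf{A}}_k x_k+\overline{\mathbf{B}}_k y_{k+\mu}+\overline{\mathbf{F}}_k-\mathbf{B}_k\mathcal{D}_k^{-1}\Psi_k(u_{k+1},\dots,u_{k+\mu-1}),$$ $$u_k=\overline{\mathbf{C}}_k x_k+\overline{\mathbf{D}}_k y_{k+\mu}+\overline{\mathbf{G}}_k-\mathcal{D}_k^{-1}\Psi_k(u_{k+1},\dots,u_{k+\mu-1}),$$ where $\overline{\mathbf{D}}_k=\mathcal{D}_k^{-1}$, $\overline{\mathbf{C}}_k=-\overline{\mathbf{D}}_k\mathcal{C}_k$, $\overline{\mathbf{G}}_k=-\overline{\mathbf{D}}_k\mathcal{G}_k$, $\overline{\mathbf{A}}_k=\mathbf{A}_k+\mathbf{B}_k\overline{\mathbf{C}}_k$, $\overline{\mathbf{B}}_k=\mathbf{B}_k\overline{\mathbf{D}}_k$, $\overline{\mathbf{F}}_k=\mathbf{F}_k+\mathbf{B}_k\overline{\mathbf{G}}_k$, and $\mathcal{C}_k=\mathbf{C}_{k+\mu}\prod_{m=0}^{\mu-1}\mathbf{A}_{k+m}$, $\mathcal{D}_k=\mathbf{C}_{k+\mu}\big(\prod_{m=1}^{\mu-1}\mathbf{A}_{k+m}\big)\mathbf{B}_k$, $\mathcal{G}_k=\mathbf{C}_{k+\mu}\sum_{s=0}^{\mu-1}\big(\prod_{m=s+1}^{\mu-1}\mathbf{A}_{k+m}\big)\mathbf{F}_{k+s}+\mathbf{G}_{k+\mu}$,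 $\Psi_k(u_{k+1},\dots,u_{k+\mu-1})=\mathbf{C}_{k+\mu}\sum_{s=1}^{\mu-1}\big(\prod_{m=s+1}^{\mu-1}\mathbf{A}_{k+m}\big)\mathbf{B}_{k+s}u_{k+s}$ (products ordered with largest index $m$ on the left, empty products equal to the identity, empty sums equal to $0$). In general this inverse is implicit: there exist such systems for which the equation for $y_{k+\mu}$ does not have a unique solution $u_k$, so no explicit formula for $u_k$ exists.
   Context: A discrete-time piecewise affine (PWA) system is $x_{k+1}=\mathbf{A}_k x_k+\mathbf{B}_k u_k+\mathbf{F}_k$, $y_k=\mathbf{C}_k x_k+\mathbf{D}_k u_k+\mathbf{G}_k$, $k\in\mathbb{Z}$, with state $x_k\in\mathbb{R}^{n_x}$, input $u_k\in\mathbb{R}^{n_u}$, output $y_k\in\mathbb{R}^{n_y}$. For each $M\in\{A,B,F,C,D,G\}$, $\mathbf{M}_k=\sum_{q=1}^{|Q|} M_{q,k}K_q(\delta_k)$, where the $M_{q,k}$ are real matrices (possibly time-varying), $\delta_k=\delta(x_k)=H(Px_k-\theta)$ with $H$ the elementwise Heaviside step function, $P\in\mathbb{R}^{n_P\times n_x}$, $\theta\in\mathbb{R}^{n_P}$, and $K_q(\delta)=1$ if $\delta\in\Delta^*_q$ and $0$ otherwise ($\Delta^*_q$ a set of binary vectors). The locations $Q_q=\{x:\delta(x)\in\Delta^*_q\}$ are disjoint, have union $\mathbb{R}^{n_x}$, and each is a union of disjoint convex polytopes. Note that $\mathbf{M}_{k+m}$ depends on $x_{k+m}$, which for $m\ge1$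 depends on $u_k$. The $q$-th component model is the affine system with matrices $A_{q,k},\dots,G_{q,k}$ and relative degree $\mu_q$ (number of time steps for an input value to influence the output). Global dynamical relative degree: the smallest integer $\mu\ge 0$ such that the explicit expression of $y_{k+\mu}$ in terms of the component matrices, the selector functions $K_q$, $x_k$ and $u_i$ ($i\ge k$) contains $u_k$ outside of a selector function for every switching sequence on time steps $k,\dots,k+\mu$. Assumptions: (A1) $x_0$ lies in the set of initial conditions from which every location is reachable in finite time; (A2) single-input single-output; (A3) switching depends only on the state, not the input; (A4) all component models have the same relative degree $\mu_c$ for all $q$ and $k$. A system is anticausal if computing the current output requires future input values. *)

From HB Require Import structures.
From mathcomp Require Import all_boot all_order all_algebra.
From mathcomp Require Import reals.
Set Implicit Arguments. Unset Strict Implicit. Unset Printing Implicit Defensive.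
Import Order.TTheory GRing.Theory Num.Theory.
Local Open Scope ring_scope.

(* A SISO discrete-time PWA system with n_x states, n_P hyperplanes and
   |Q| = nQ locations.  Time k ranges over int. *)
Record pwa (R : realType) (nx nP nQ : nat) := PWA {
  Aq : 'I_nQ -> int -> 'M[R]_nx;
  Bq : 'I_nQ -> int -> 'cV[R]_nx;
  Fq : 'I_nQ -> int -> 'cV[R]_nx;
  Cq : 'I_nQ -> int -> 'rV[R]_nx;
  Dq : 'I_nQ -> int -> R;
  Gq : 'I_nQ -> int -> R;
  Pm : 'M[R]_(nP, nx);
  theta : 'cV[R]_nP;
  Dstar : 'I_nQ -> pred {ffun 'I_nP -> bool}
}.

Section PWA.
Variables (R : realType) (nx nP nQ : nat) (S : pwa R nx nP nQ).

Definition delta (x : 'cV[R]_nx) : {ffun 'I_nP -> bool} :=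
  [ffun i => 0 <= (Pm S *m x - theta S) i 0].

Definition Ksel (q : 'I_nQ) (x : 'cV[R]_nx) : R := (Dstar S q (delta x))%:R.

Definition pwa_wf : Prop := forall x : 'cV[R]_nx, exists! q, Dstar S q (delta x).

Definition Abold k x : 'M[R]_nx := \sum_(q < nQ) Ksel q x *: Aq S q k.
Definition Bbold k x : 'cV[R]_nx := \sum_(q < nQ) Ksel q x *: Bq S q k.
Definition Fbold k x : 'cV[R]_nx := \sum_(q < nQ) Ksel q x *: Fq S q k.
Definition Cbold k x : 'rV[R]_nx := \sum_(q < nQ) Ksel q x *: Cq S q k.
Definition Dbold k x : R := \sum_(q < nQ) Ksel q x * Dq S q k.
Definition Gbold k x : R := \sum_(q < nQ) Ksel q x * Gq S q k.

Definition step k (x : 'cV[R]_nx) (u : R) : 'cV[R]_nx :=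
  Abold k x *m x + u *: Bbold k x + Fbold k x.
Definition out k (x : 'cV[R]_nx) (u : R) : R :=
  (Cbold k x *m x) 0 0 + Dbold k x * u + Gbold k x.

Definition is_traj (x : int -> 'cV[R]_nx) (u y : int -> R) : Prop :=
  forall k : int, x (k + 1) = step k (x k) (u k) /\ y k = out k (x k) (u k).

Fixpoint sim (k0 : int) (x0 : 'cV[R]_nx) (w : int -> R) (n : nat) : 'cV[R]_nx :=
  match n with
  | 0 => x0
  | n'.+1 => step (k0 + n'%:Z) (sim k0 x0 w n') (w (k0 + n'%:Z))
  end.

Definition A1 (x0 : 'cV[R]_nx) : Prop :=
  forall q : 'I_nQ, exists (w : int -> R) (N : nat),
    Dstar S q (delta (sim 0 x0 w N)).

Fixpoint lprod (f : nat -> 'M[R]_nx) (lo cnt : nat) : 'M[R]_nx :=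
  match cnt with
  | 0 => 1%:M
  | c.+1 => f (lo + c)%N *m lprod f lo c
  end.

(* coefficient of u_k in y_{k+j} for the q-th affine component model *)
Definition markov_comp (q : 'I_nQ) (k : int) (j : nat) : R :=
  if j is 0 then Dq S q k else
  (Cq S q (k + j%:Z) *m lprod (fun m => Aq S q (k + m%:Z)) 1 j.-1 *m Bq S q k) 0 0.

Definition comp_reldeg (q : 'I_nQ) (k : int) (mu : nat) : Prop :=
  (forall j, (j < mu)%N -> markov_comp q k j = 0) /\ markov_comp q k mu != 0.

Definition A4 : Prop := exists muc : nat, forall q k, comp_reldeg q k muc.

(* coefficient of u_k (outside selector functions) in the explicit expression
   of y_{k+j} along the switching sequence sigma (sigma m = location at k+m) *)
Definition coef_switch (k : int) (sigma : nat -> 'I_nQ) (j : nat) : R :=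
  if j is 0 then Dq S (sigma 0%N) k else
  (Cq S (sigma j) (k + j%:Z)
     *m lprod (fun m => Aq S (sigma m) (k + m%:Z)) 1 j.-1
     *m Bq S (sigma 0%N) k) 0 0.

Definition contains_uk (j : nat) : Prop :=
  forall (k : int) (sigma : nat -> 'I_nQ), coef_switch k sigma j != 0.

Definition global_reldeg (mu : nat) : Prop :=
  contains_uk mu /\ forall j, (j < mu)%N -> ~ contains_uk j.

Section Inverse.
Variables (x : int -> 'cV[R]_nx) (u : int -> R) (mu : nat).
Let Ab (k : int) := Abold k (x k).
Let Bb (k : int) := Bbold k (x k).
Let Fb (k : int) := Fbold k (x k).
Let Cb (k : int) := Cbold k (x k).
Let Gb (k : int) := Gbold k (x k).

Definition calC k : 'rV[R]_nx :=
  Cb (k + mu%:Z) *m lprod (fun m => Ab (k + m%:Z)) 0 mu.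
Definition calD k : R :=
  (Cb (k + mu%:Z) *m lprod (fun m => Ab (k + m%:Z)) 1 mu.-1 *m Bb k) 0 0.
Definition calG k : R :=
  (Cb (k + mu%:Z) *m \sum_(s < mu)
       (lprod (fun m => Ab (k + m%:Z)) s.+1 (mu.-1 - s) *m Fb (k + s%:Z))) 0 0
  + Gb (k + mu%:Z).
Definition Psi k : R :=
  (Cb (k + mu%:Z) *m \sum_(1 <= s < mu)
       (lprod (fun m => Ab (k + m%:Z)) s.+1 (mu.-1 - s)
          *m (u (k + s%:Z) *: Bb (k + s%:Z)))) 0 0.

Definition Dbar k : R := (calD k)^-1.
Definition Cbar k : 'rV[R]_nx := - (Dbar k *: calC k).
Definition Gbar k : R := - (Dbar k * calG k).
Definition Abar k : 'M[R]_nx := Ab k + Bb k *m Cbar k.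
Definition Bbar k : 'cV[R]_nx := Dbar k *: Bb k.
Definition Fbar k : 'cV[R]_nx := Fb k + Gbar k *: Bb k.
End Inverse.

End PWA.

From HB Require Import structures.
From mathcomp Require Import all_boot all_order all_algebra.
From mathcomp Require Import reals.
From mathcomp Require Import zify ring lra.
Set Implicit Arguments. Unset Strict Implicit. Unset Printing Implicit Defensive.
Import Order.TTheory GRing.Theory Num.Theory.
Local Open Scope ring_scope.

(* Unrolling the state equation mu steps, y_{k+mu} is affine in x_k and
   u_k, ..., u_{k+mu-1}: y_{k+mu} = calC x_k + calD u_k + Psi + calG, where the
   direct feedthroughs D_q vanish because all components have the same
   positive relative degree.  Along the actual switching sequence calD is the
   coefficient of u_k in y_{k+mu}, nonzero by definition of the global
   relative degree, so the equation can be solved for u_k and substituted into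
   the state equation.  Non-uniqueness in general is witnessed by the scalar
   system x_{k+1} = u_k, y_k = x_k - 2 [x_k >= 0], for which u_k = 1 and
   u_k = -1 both give y_{k+1} = -1. *)

Lemma eq_lprod (R : realType) (n : nat) (f g : nat -> 'M[R]_n) lo c :
  f =1 g -> lprod f lo c = lprod g lo c.
Proof. by move=> fg; elim: c => //= c ->; rewrite fg. Qed.

Section Selection.
Variables (R : realType) (nx nP nQ : nat) (S : pwa R nx nP nQ).
Hypothesis wf : pwa_wf S.

Lemma Ksel_loc x q : Dstar S q (delta S x) -> forall q', Ksel S q' x = (q' == q)%:R.
Proof.
move=> xq q'; rewrite /Ksel; have [q0 [_ uniq_q]] := wf x.
have [xq'|xq'] := boolP (Dstar S q' (delta S x)).
  by rewrite -(uniq_q _ xq) -(uniq_q _ xq') eqxx.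
by case: eqP => // eq_q'; rewrite eq_q' xq in xq'.
Qed.

Lemma sum_Ksel_loc (V : lmodType R) (M : 'I_nQ -> V) x q :
  Dstar S q (delta S x) -> \sum_(q' < nQ) Ksel S q' x *: M q' = M q.
Proof.
move=> xq; rewrite (bigD1 q) //= (Ksel_loc xq) eqxx scale1r big1 ?addr0 //.
by move=> q' /negbTE q'q; rewrite (Ksel_loc xq) q'q scale0r.
Qed.

Section Bold.
Variables (k : int) (x : 'cV[R]_nx) (q : 'I_nQ).
Hypothesis xq : Dstar S q (delta S x).

Lemma Abold_loc : Abold S k x = Aq S q k. Proof. exact: sum_Ksel_loc. Qed.
Lemma Bbold_loc : Bbold S k x = Bq S q k. Proof. exact: sum_Ksel_loc. Qed.
Lemma Fbold_loc : Fbold S k x = Fq S q k. Proof. exact: sum_Ksel_loc. Qed.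
Lemma Cbold_loc : Cbold S k x = Cq S q k. Proof. exact: sum_Ksel_loc. Qed.
Lemma Dbold_loc : Dbold S k x = Dq S q k.
Proof. exact: (@sum_Ksel_loc R^o). Qed.
Lemma Gbold_loc : Gbold S k x = Gq S q k.
Proof. exact: (@sum_Ksel_loc R^o). Qed.
End Bold.

Lemma exists_switching_seq (xs : nat -> 'cV[R]_nx) :
  exists sigma : nat -> 'I_nQ, forall m, Dstar S (sigma m) (delta S (xs m)).
Proof.
have [q0 _] := wf (xs 0%N).
exists (fun m => odflt q0 [pick q | Dstar S q (delta S (xs m))]) => m.
case: pickP => [q //|none]; have [q [xq _]] := wf (xs m).
by rewrite none in xq.
Qed.

End Selection.

Lemma Dq_eq0 (R : realType) (nx nP nQ : nat) (S : pwa R nx nP nQ) mu :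
  A4 S -> global_reldeg S mu -> (0 < mu)%N -> forall q k, Dq S q k = 0.
Proof.
move=> [muc reldeg] [_ not_uk] mu_gt0.
have muc_gt0 : (0 < muc)%N.
  case: muc reldeg => // reldeg0; case: (not_uk 0%N mu_gt0) => k sigma.
  exact: (proj2 (reldeg0 (sigma 0%N) k)).
by move=> q k; exact: (proj1 (reldeg q k) 0%N muc_gt0).
Qed.

Section Trajectory.
Variables (R : realType) (nx nP nQ : nat) (S : pwa R nx nP nQ).
Variables (x : int -> 'cV[R]_nx) (u y : int -> R).
Hypothesis traj : is_traj S x u y.

Local Notation Phi k := (fun m : nat => Abold S (k + m%:Z) (x (k + m%:Z))).
Local Notation Bk k := (Bbold S k (x k)).
Local Notation Fk k := (Fbold S k (x k)).

Lemma traj_state_unroll k n : x (k + n%:Z) =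
  lprod (Phi k) 0 n *m x k +
  \sum_(s < n) lprod (Phi k) s.+1 (n.-1 - s)
                 *m (u (k + s%:Z) *: Bk (k + s%:Z) + Fk (k + s%:Z)).
Proof.
elim: n => [|n IHn]; first by rewrite addr0 big_ord0 mul1mx addr0.
have -> : k + n.+1%:Z = (k + n%:Z) + 1 by rewrite -addrA -PoszD addn1.
rewrite (proj1 (traj _)) /step {2}IHn big_ord_recr /= subnn mul1mx add0n.
rewrite mulmxDr mulmxA -!addrA; congr (_ + (_ + _)).
rewrite mulmx_sumr; apply: eq_bigr => -[s /= lt_s_n] _; rewrite mulmxA.
have -> : (n - s = (n.-1 - s).+1)%N by lia.
by rewrite /=; congr (_ *m _ *m _); congr (Abold _ _ (x _)); congr (_ + _%:Z); lia.
Qed.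

Lemma traj_output_unroll mu k : (0 < mu)%N -> (forall q k, Dq S q k = 0) ->
  y (k + mu%:Z) = (calC S x mu k *m x k) 0 0 + calD S x mu k * u k
                  + Psi S x u mu k + calG S x mu k.
Proof.
case: mu => // m _ D0.
have Dbold0 : Dbold S (k + m.+1%:Z) (x (k + m.+1%:Z)) = 0.
  by rewrite /Dbold big1 // => q _; rewrite D0 mulr0.
rewrite (proj2 (traj _)) /out Dbold0 mul0r addr0 [X in (_ *m X) 0 0 + _]traj_state_unroll.
rewrite /calC /calD /Psi /calG /=.
have split_inputs : \sum_(s < m.+1) lprod (Phi k) s.+1 (m - s)
                      *m (u (k + s%:Z) *: Bk (k + s%:Z) + Fk (k + s%:Z))
  = u k *: (lprod (Phi k) 1 m *m Bk k)
    + \sum_(1 <= s < m.+1) lprod (Phi k) s.+1 (m - s) *m (u (k + s%:Z) *: Bk (k + s%:Z))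
    + \sum_(s < m.+1) lprod (Phi k) s.+1 (m - s) *m Fk (k + s%:Z).
  rewrite (eq_bigr _ (fun s _ => mulmxDr _ _ _)) big_split; congr (_ + _).
  rewrite big_ord_recl subn0 addr0 -scalemxAr big_add1 big_mkord.
  by congr (_ + _).
rewrite split_inputs !mulmxDr -!scalemxAr !mulmxA.
rewrite ![((_ + _) : 'M[R]_1) 0 0]mxE [((_ *: _) : 'M[R]_1) 0 0]mxE.
by rewrite [u k * _]mulrC !addrA.
Qed.

End Trajectory.

Section InverseSystem.
Variables (R : realType) (nx nP nQ : nat) (S : pwa R nx nP nQ).
Variables (x : int -> 'cV[R]_nx) (u y : int -> R) (mu : nat) (k : int).

Lemma calD_coef_switch (sigma : nat -> 'I_nQ) : pwa_wf S -> (0 < mu)%N ->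
  (forall m, Dstar S (sigma m) (delta S (x (k + m%:Z)))) ->
  calD S x mu k = coef_switch S k sigma mu.
Proof.
move=> wf; case: mu => // m _ sigmaP.
have sigma0P := sigmaP 0%N; rewrite addr0 in sigma0P.
rewrite /calD /coef_switch (Cbold_loc wf _ (sigmaP m.+1)) (Bbold_loc wf _ sigma0P).
by rewrite (eq_lprod _ _ (fun j => Abold_loc wf _ (sigmaP j))).
Qed.

Lemma calD_neq0 : pwa_wf S -> global_reldeg S mu -> (0 < mu)%N -> calD S x mu k != 0.
Proof.
move=> wf [uk_mu _] mu_gt0.
have [sigma sigmaP] := exists_switching_seq wf (fun m => x (k + m%:Z)).
by rewrite (calD_coef_switch wf mu_gt0 sigmaP).
Qed.

Lemma input_of_output : calD S x mu k != 0 ->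
  y (k + mu%:Z) = (calC S x mu k *m x k) 0 0 + calD S x mu k * u k
                  + Psi S x u mu k + calG S x mu k ->
  u k = (Cbar S x mu k *m x k) 0 0 + Dbar S x mu k * y (k + mu%:Z)
        + Gbar S x mu k - (calD S x mu k)^-1 * Psi S x u mu k.
Proof.
move=> D_neq0 ->; rewrite /Cbar /Gbar /Dbar mulNmx -scalemxAl !mxE.
by field.
Qed.

Lemma state_of_input : is_traj S x u y ->
  u k = (Cbar S x mu k *m x k) 0 0 + Dbar S x mu k * y (k + mu%:Z)
        + Gbar S x mu k - (calD S x mu k)^-1 * Psi S x u mu k ->
  x (k + 1) = Abar S x mu k *m x k + y (k + mu%:Z) *: Bbar S x mu k
              + Fbar S x mu k - ((calD S x mu k)^-1 * Psi S x u mu k) *: Bbold S k (x k).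
Proof.
move=> traj u_k; rewrite (proj1 (traj k)) /step u_k /Abar /Bbar /Fbar.
rewrite mulmxDl -mulmxA [Cbar _ _ _ _ *m _ in RHS]mx11_scalar mul_mx_scalar.
by apply/matrixP => i j; rewrite !mxE; ring.
Qed.

End InverseSystem.

Section NonUniqueInverse.
Variable R : realType.

Definition noninj_pwa : pwa R 1 1 2 :=
  @PWA R 1 1 2 (fun _ _ => 0) (fun _ _ => const_mx 1) (fun _ _ => 0)
    (fun _ _ => const_mx 1) (fun _ _ => 0)
    (fun q _ => if q == ord_max then -2 else 0) (const_mx 1) 0
    (fun q => [pred d : {ffun 'I_1 -> bool} | d ord0 == (val q == 1%N)]).

Definition noninj_loc (x : 'cV[R]_1) : 'I_2 := if 0 <= x 0 0 then ord_max else ord0.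

Lemma noninj_Dstar q x : Dstar noninj_pwa q (delta noninj_pwa x) = (q == noninj_loc x).
Proof.
rewrite /= /delta ffunE !mxE big_ord1 !mxE mul1r subr0 /noninj_loc.
by case: (0 <= x 0 0); case: q => [[|[|q]] lt_q2].
Qed.

Lemma noninj_locP x : Dstar noninj_pwa (noninj_loc x) (delta noninj_pwa x).
Proof. by rewrite noninj_Dstar. Qed.

Lemma noninj_wf : pwa_wf noninj_pwa.
Proof.
move=> x; exists (noninj_loc x); split; first exact: noninj_locP.
by move=> q; rewrite noninj_Dstar => /eqP.
Qed.

Lemma noninj_step k x u : step noninj_pwa k x u = u *: const_mx 1.
Proof.
have xq := noninj_locP x.
by rewrite /step (Abold_loc noninj_wf k xq) (Bbold_loc noninj_wf k xq)
  (Fbold_loc noninj_wf k xq) mul0mx add0r addr0.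
Qed.

Lemma noninj_out k x u : out noninj_pwa k x u = x 0 0 + (if 0 <= x 0 0 then -2 else 0).
Proof.
have xq := noninj_locP x.
rewrite /out (Cbold_loc noninj_wf k xq) (Dbold_loc noninj_wf k xq) (Gbold_loc noninj_wf k xq).
rewrite mul0r addr0 !mxE big_ord1 mxE mul1r /noninj_loc.
by case: (0 <= x 0 0).
Qed.

Lemma noninj_markov1 : (const_mx 1 *m (1%:M : 'M[R]_1) *m const_mx 1 : 'M[R]_1) 0 0 = 1.
Proof. by rewrite mulmx1 !mxE big_ord1 !mxE mulr1. Qed.

Lemma noninj_A4 : A4 noninj_pwa.
Proof.
exists 1%N => q k; split; last by rewrite /markov_comp noninj_markov1 oner_neq0.
by case.
Qed.

Lemma noninj_reldeg : global_reldeg noninj_pwa 1.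
Proof.
split; first by move=> k sigma; rewrite /coef_switch noninj_markov1 oner_neq0.
by case=> // _ /(_ 0 (fun _ => ord0)); rewrite /coef_switch eqxx.
Qed.

Lemma noninj_A1 : A1 noninj_pwa 0.
Proof.
move=> q; exists (fun _ => if q == ord_max then 1 else -1), 1%N.
rewrite noninj_Dstar /= noninj_step /noninj_loc !mxE.
by case: q => [[|[|q]] lt_q2] //=; rewrite mulr1 ?ler0N1 ?ler01.
Qed.

End NonUniqueInverse.

Theorem theorem2 (R : realType) :
  (forall (nx nP nQ : nat) (S : pwa R nx nP nQ) (mu : nat),
     pwa_wf S -> A4 S -> (1 <= mu)%N -> global_reldeg S mu ->
     forall (x : int -> 'cV[R]_nx) (u y : int -> R),
       is_traj S x u y -> A1 S (x 0) ->
       forall k : int,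
         calD S x mu k != 0 /\
         x (k + 1) = Abar S x mu k *m x k + y (k + mu%:Z) *: Bbar S x mu k
                     + Fbar S x mu k
                     - ((calD S x mu k)^-1 * Psi S x u mu k) *: Bbold S k (x k) /\
         u k = (Cbar S x mu k *m x k) 0 0 + Dbar S x mu k * y (k + mu%:Z)
               + Gbar S x mu k - (calD S x mu k)^-1 * Psi S x u mu k)
  /\
  (exists (nx nP nQ : nat) (S : pwa R nx nP nQ) (mu : nat),
     [/\ pwa_wf S, A4 S, (1 <= mu)%N & global_reldeg S mu] /\
     exists (x0 : 'cV[R]_nx) (w : int -> R) (k : nat) (v : R),
       [/\ A1 S x0, v != w k%:Z &
           let w' := fun i : int => if i == k%:Z then v else w i in
           out S (k%:Z + mu%:Z) (sim S 0 x0 w' (k + mu)) (w' (k%:Z + mu%:Z))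
           = out S (k%:Z + mu%:Z) (sim S 0 x0 w (k + mu)) (w (k%:Z + mu%:Z))]).
Proof.
split.
  move=> nx nP nQ S mu wf a4 mu_gt0 reldeg x u y traj _ k.
  have D_neq0 := calD_neq0 x k wf reldeg mu_gt0.
  have y_out := traj_output_unroll traj k mu_gt0 (Dq_eq0 a4 reldeg mu_gt0).
  have u_k := input_of_output D_neq0 y_out.
  by split=> //; split; [exact: state_of_input | exact: u_k].
exists 1%N, 1%N, 2%N, (noninj_pwa R), 1%N; split.
  by split; [exact: noninj_wf | exact: noninj_A4 | | exact: noninj_reldeg].
exists 0, (fun _ => 1), 0%N, (-1); split; first exact: noninj_A1.
  by apply/eqP; lra.
by rewrite /= !noninj_step !noninj_out !mxE !mulr1 ler0N1 ler01; lra.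
Qed.
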